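(* Let $c_1>0$ be a sufficiently small absolute constant and $K=\exp(c_1 s)$. For any fixed $\mathbf{A}\in\mathcal{A}_{\mathsf{suc}}$, with probability at least $1-\exp(-s/2)$ over $V=\{\mathbf{v}_1,\dots,\mathbf{v}_{16sK}\}$ drawn independently and uniformly from $\frac1{\sqrt d}\mathcal{H}_d$, $$\big|\mathcal{N}(\mathsf{O}^{\mathbf{M}_\mathbf{A}}(\mathbf{A},V),d^{-8})\big|\ge K.$$
   Context: Setting: $d$ large, $\delta\in(0,1)$, $k=d^{1-\delta-o(1)}$, $s=d^{1-\delta/2}\log^2 d$, $\xi=2\exp(-\log^5 d)$, $\xi'=\sqrt d\xi$, $\mathcal{H}_d=\{-1,1\}^d$, $\mathbb{S}^d$ the unit sphere. A fixed deterministic $(k,n)$-protocol: on $\mathbf{A}\in\{-1,1\}^{(d/2)\times d}$ Alice sends $\mathbf{M}_\mathbf{A}\in\{0,1\}^{kd}$; after receiving $\mathbf{v}\in\frac1{\sqrt d}\mathcal{H}_d$ she sends $\mathbf{R}_{\mathbf{A},\mathbf{v}}\in(\mathsf{row}(\mathbf{A})\cup\{\mathsf{nil}\})^n$; Bob outputs a unit vector $\mathbf{x}_{\mathbf{M},\mathbf{v},\mathbf{R}}\in\mathbb{S}^d$, defined for all $\mathbf{M}\in\{0,1\}^{kd}$, $\mathbf{v}$, $\mathbf{R}\in(\{-1,1\}^d\cup\{\mathsf{nil}\})^n$; $\mathbf{x}_{\mathbf{A},\mathbf{v}}=\mathbf{x}_{\mathbf{M}_\mathbf{A},\mathbf{v},\mathbf{R}_{\mathbf{A},\mathbf{v}}}$.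 Success on $(\mathbf{A},\mathbf{v})$: $\|\mathbf{A}\mathbf{x}_{\mathbf{A},\mathbf{v}}\|_\infty\le\xi'$ and $|\langle\mathbf{v},\mathbf{x}_{\mathbf{A},\mathbf{v}}\rangle|\ge\sqrt{s/d}$; the protocol succeeds with probability at least $1/2$ over uniform $(\mathbf{A},\mathbf{v})$. $\mathcal{A}_{\mathsf{suc}}$: the matrices $\mathbf{A}$ on which it succeeds with probability at least $1/4$ over uniform $\mathbf{v}$. For a matrix $\mathbf{B}\in\{-1,1\}^{m\times d}$ ($m\le d/2$), write $\mathbf{R}\subseteq\mathsf{row}(\mathbf{B})\cup\{\mathsf{nil}\}$ if every entry of $\mathbf{R}$ is $\mathsf{nil}$ or a row of $\mathbf{B}$. Table: $\mathsf{T}^{\mathbf{M}}(\mathbf{B},V)=\{\mathbf{x}_{\mathbf{M},\mathbf{v},\mathbf{R}}:\mathbf{v}\in V,\ \mathbf{R}\subseteq\mathsf{row}(\mathbf{B})\cup\{\mathsf{nil}\}\}$. Orthogonal entries: $\mathsf{O}^{\mathbf{M}}(\mathbf{B},V)=\{\mathbf{x}\in\mathsf{T}^{\mathbf{M}}(\mathbf{B},V):\|\mathbf{B}\mathbf{x}\|_\infty\le\xi'\}$. For $X\subseteq\mathbb{R}^d$ and $\alpha>0$, $\mathcal{N}(X,\alpha)$ denotes a largest subset $X'\subseteq X$ whose points have pairwise distance at least $\alpha$. *)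

From HB Require Import structures.
From mathcomp Require Import all_boot all_order all_algebra.
From mathcomp Require Import finmap.
From mathcomp Require Import boolp reals Rstruct.
From mathcomp Require Import sequences exp.
From Stdlib Require Import Rdefinitions.

Set Implicit Arguments.
Unset Strict Implicit.
Unset Printing Implicit Defensive.
Import Order.TTheory GRing.Theory Num.Theory.
Local Open Scope ring_scope.
Local Open Scope fset_scope.

Notation R := Rdefinitions.R.

(* A sign vector / sign matrix is encoded by booleans: true |-> 1, false |-> -1. *)
Definition sgnR (b : bool) : R := if b then 1 else -1.
Definition sgnmx (m d : nat) (A : 'M[bool]_(m, d)) : 'M[R]_(m, d) := map_mx sgnR A.

(* v in (1/sqrt d) H_d, encoded by a boolean row vector *)
Definition vreal (d : nat) (v : 'rV[bool]_d) : 'rV[R]_d :=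
  (Num.sqrt (d%:R))^-1 *: sgnmx v.

Definition ninf (m d : nat) (B : 'M[R]_(m, d)) (x : 'rV[R]_d) : R :=
  \big[Num.max/0]_(i < m) `|(B *m x^T) i 0|.

Definition dotR (d : nat) (u w : 'rV[R]_d) : R := \sum_(i < d) u 0 i * w 0 i.

Definition distR (d : nat) (u w : 'rV[R]_d) : R :=
  Num.sqrt (\sum_(i < d) (u 0 i - w 0 i) ^+ 2).

(* "R subseteq row(B) cup {nil}": every entry is nil (None) or a row of B *)
Definition sub_rows (m d n : nat) (B : 'M[bool]_(m, d))
    (Rm : n.-tuple (option 'rV[bool]_d)) : bool :=
  all (fun o => if o is Some r then [exists j : 'I_m, r == row j B] else true) Rm.

Definition bob_fun (d k n : nat) :=
  (k * d).-tuple bool -> 'rV[bool]_d -> n.-tuple (option 'rV[bool]_d) -> 'rV[R]_d.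

Definition table (m d k n : nat) (x : bob_fun d k n) (M : (k * d).-tuple bool)
    (B : 'M[bool]_(m, d)) (V : {set 'rV[bool]_d}) : {fset 'rV[R]_d} :=
  [fset x M v Rm | v in V, Rm in [pred Rm | sub_rows B Rm]].

Definition orth_entries (m d k n : nat) (x : bob_fun d k n) (xi' : R)
    (M : (k * d).-tuple bool) (B : 'M[bool]_(m, d)) (V : {set 'rV[bool]_d})
    : {fset 'rV[R]_d} :=
  [fset y in table x M B V | ninf (sgnmx B) y <= xi'].

(* alpha-separated subsets, and |N(X, alpha)| = size of a largest one *)
Definition separated (d : nat) (Y : {fset 'rV[R]_d}) (alpha : R) : bool :=
  [forall y1 : Y, forall y2 : Y, (y1 != y2) ==> (alpha <= distR (val y1) (val y2))].

Definition packing_card (d : nat) (X : {fset 'rV[R]_d}) (alpha : R) : nat :=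
  (\max_(Y <- fpowerset X | separated Y alpha) #|` Y|)%N.

Definition s_par (delta : R) (d : nat) : R :=
  powR (d%:R) (1 - delta / 2) * (ln (d%:R)) ^+ 2.
Definition xi_par (d : nat) : R := 2 * expR (- (ln (d%:R)) ^+ 5).
Definition xi'_par (d : nat) : R := Num.sqrt (d%:R) * xi_par d.

Definition success (d k n : nat) (Mmsg : 'M[bool]_(d./2, d) -> (k * d).-tuple bool)
    (Rmsg : 'M[bool]_(d./2, d) -> 'rV[bool]_d -> n.-tuple (option 'rV[bool]_d))
    (x : bob_fun d k n) (s : R) (A : 'M[bool]_(d./2, d)) (v : 'rV[bool]_d) : bool :=
  let y := x (Mmsg A) v (Rmsg A v) in
  (ninf (sgnmx A) y <= xi'_par d) && (Num.sqrt (s / d%:R) <= `|dotR (vreal v) y|).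

From HB Require Import structures.
From mathcomp Require Import all_boot all_order all_algebra.
From mathcomp Require Import finmap.
From mathcomp Require Import boolp reals Rstruct.
From mathcomp Require Import sequences exp.
From mathcomp Require Import ring lra.
Import Order.TTheory GRing.Theory Num.Theory.
Local Open Scope ring_scope.

(* Fix A in A_suc, so that at least a quarter of the sign vectors v are
   successes.  Scan the samples and greedily keep every successful v whose
   output x_v is d^-8-far from all outputs kept so far: the kept outputs form a
   d^-8-separated set of orthogonal entries, hence a lower bound for the packing
   number.  A successful x_v satisfies |<v, x_v>| >= sqrt(s/d); as <v, .> is
   (sqrt d)-Lipschitz, every successful v whose output is d^-8-close to a kept
   x_u also has |<v, x_u>| >= (sqrt s - 1) / sqrt d, and by Hoeffding's
   inequality this happens for at most a 2 exp(-(sqrt s - 1)^2 / 8) fraction of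
   the v.  So while fewer than K outputs are kept, a fresh sample is kept with
   probability at least 1/8, and among N = 16 s K samples at most K are kept
   with probability at most (K + 1) N^K (7/8)^(N - K) <= exp(-s/2). *)

Set Implicit Arguments.
Unset Strict Implicit.
Unset Printing Implicit Defensive.

Lemma bin_le_expn (n m : nat) : ('C(n, m) <= n ^ m)%N.
Proof.
apply: leq_trans (leq_pmulr _ (fact_gt0 m)) _.
have -> : (n ^ m = \prod_(i < m) n)%N by rewrite prod_nat_const card_ord.
rewrite bin_ffact ffact_prod.
by apply: leq_prod => i _; rewrite leq_subr.
Qed.

Lemma natr_card_set {S : pzSemiRingType} (U : finType) (P : pred U) :
  (#|[set u | P u]|%:R : S) = \sum_(u : U) (P u)%:R.
Proof.
rewrite -sum1_card natr_sum big_mkcond /=; apply: eq_bigr => u _.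
by rewrite inE; case: (P u).
Qed.

Lemma natr_card_setC {S : pzRingType} (U : finType) (P : pred U) :
  (#|[set u | ~~ P u]|%:R : S) = #|U|%:R - #|[set u | P u]|%:R.
Proof.
rewrite -(cardsC [set u | P u]) natrD addrC addKr; congr (_%:R).
by apply: eq_card => u; rewrite !inE.
Qed.

Lemma natr_leq_sum {S : pzSemiRingType} (i M : nat) :
  ((i <= M)%N%:R : S) = \sum_(m < M.+1) (i == m)%:R.
Proof.
elim: M => [|M IH]; first by rewrite big_ord1 leqn0.
rewrite big_ord_recr /= -IH leq_eqVlt ltnS.
by case: eqP => [->|_]; rewrite ?ltnn ?addr0 ?add0r.
Qed.

Lemma sum_tuple_cons {V : nmodType} (T : finType) (N : nat)
    (F : N.+1.-tuple T -> V) :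
  \sum_(V : N.+1.-tuple T) F V = \sum_(v : T) \sum_(W : N.-tuple T) F [tuple of v :: W].
Proof.
rewrite pair_bigA /= (reindex (fun p : T * N.-tuple T => [tuple of p.1 :: p.2])) //=.
exists (fun t : N.+1.-tuple T => (thead t, [tuple of behead t])) => [[v W] _|t _] /=.
  by rewrite theadE; congr pair; apply: val_inj.
by rewrite [RHS]tuple_eta.
Qed.

Section GreedySelection.
Variables (T : finType) (fresh : T -> seq T -> bool).

Fixpoint greedy (l : seq T) : seq T :=
  if l is v :: l' then
    if fresh v (greedy l') then v :: greedy l' else greedy l'
  else [::].

Lemma greedy_sub l : {subset greedy l <= l}.
Proof.
elim: l => [|v l IH] //= u; case: ifP => _; last by move/IH; rewrite inE orbC => ->.
by rewrite !inE => /orP [->|/IH ->]; rewrite ?orbT.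
Qed.

Variables (F : numDomainType) (M : nat) (q : F).
Hypothesis q_ge0 : 0 <= q.
Hypothesis card_stale : forall g, (size g <= M)%N ->
  (#|[set v | ~~ fresh v g]|%:R : F) <= q.

(* Prepending v to the samples adds v to the selection exactly when v is fresh,
   and the number of stale v is at most q while the selection is small. *)
Lemma sum_size_greedy_cons (W : seq T) (m : nat) : (m <= M)%N ->
  \sum_(v : T) ((size (greedy (v :: W)) == m)%:R : F)
    <= (0 < m)%:R * (size (greedy W) == m.-1)%:R * #|T|%:R
       + (size (greedy W) == m)%:R * q.
Proof.
move=> mM /=; set g := greedy W.
have card_T : \sum_(v : T) (1 : F) = #|T|%:R by rewrite sumr_const.
have [gm|gNm] := eqVneq (size g) m => /=.
  apply: (le_trans (y := #|[set v | ~~ fresh v g]|%:R)).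
    rewrite natr_card_set; apply: ler_sum => v _.
    by case: ifP => _; rewrite /= gm ?eqxx ?eqn_leq ?ltnn.
  rewrite mul1r ler_wpDl ?card_stale ?gm //.
  by rewrite !mulr_ge0 ?ler0n.
rewrite mul0r addr0; case: m gNm mM => [|m] gNm mM /=.
  by rewrite !mul0r big1 // => v _; case: ifP; rewrite //= (negbTE gNm).
have [gm|gNm'] := eqVneq (size g) m => /=; last first.
  rewrite mulr0 mul0r big1 // => v _.
  by case: ifP => _; rewrite /= ?eqSS ?(negbTE gNm') ?(negbTE gNm).
rewrite !mul1r -card_T; apply: ler_sum => v _.
by rewrite lern1 leq_b1.
Qed.

Lemma card_greedy_size (N m : nat) : (m <= M)%N ->
  (#|[set V : N.-tuple T | size (greedy V) == m]|%:R : F)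
    <= 'C(N, m)%:R * #|T|%:R ^+ m * q ^+ (N - m).
Proof.
elim: N m => [|N IH] m mM.
  case: m mM => [|m] _.
    rewrite bin0 !expr0 !mul1r lern1; apply: leq_trans (max_card _) _.
    by rewrite card_tuple.
  rewrite bin_small // !mul0r lern0 cards_eq0; apply/eqP/setP => V.
  by rewrite !inE tuple0.
pose size_eq k (W : N.-tuple T) := size (greedy W) == k.
rewrite natr_card_set sum_tuple_cons exchange_big /=.
apply: le_trans; first by apply: ler_sum => W _; apply: (sum_size_greedy_cons W mM).
rewrite big_split /= -!mulr_suml -mulr_sumr -!(natr_card_set (size_eq _)).
case: m mM => [|m] mM /=.
  rewrite !mul0r add0r bin0 subn0 !mul1r exprSr ler_wpM2r //.
  by have := IH 0%N mM; rewrite bin0 subn0 !mul1r.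
have le_m : #|[set W | size_eq m W]|%:R * #|T|%:R
    <= 'C(N, m)%:R * #|T|%:R ^+ m.+1 * q ^+ (N - m).
  by rewrite exprSr !mulrA mulrAC ler_wpM2r // (IH m (ltnW mM)).
have le_Sm : #|[set W | size_eq m.+1 W]|%:R * q
    <= 'C(N, m.+1)%:R * #|T|%:R ^+ m.+1 * q ^+ (N - m).
  have := IH m.+1 mM; have [mN|Nm] := ltnP m N; last first.
    by rewrite bin_small ?ltnS // !mul0r => /mulr_le0_ge0 ->.
  by move=> le_A; rewrite -(subnSK mN) [q ^+ _.+1]exprSr mulrA ler_wpM2r.
rewrite mul1r binS natrD !mulrDl subSS addrC; exact: lerD.
Qed.

End GreedySelection.

Lemma card_greedy_size_le (F : numDomainType) (T : finType)
    (fresh : T -> seq T -> bool) (M N : nat) (theta : F) :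
  0 <= theta <= 1 -> (M <= N)%N ->
  (forall g, (size g <= M)%N ->
     (#|[set v | ~~ fresh v g]|%:R : F) <= theta * #|T|%:R) ->
  (#|[set V : N.-tuple T | (size (greedy fresh V) <= M)%N]|%:R : F)
    <= M.+1%:R * N%:R ^+ M * theta ^+ (N - M) * #|T|%:R ^+ N.
Proof.
move=> /andP [theta_ge0 theta_le1] MN card_stale.
have q_ge0 : 0 <= theta * #|T|%:R by rewrite mulr_ge0.
rewrite natr_card_set.
under eq_bigr do rewrite natr_leq_sum.
rewrite exchange_big /=.
apply: (le_trans (y := \sum_(m < M.+1)
  N%:R ^+ M * theta ^+ (N - M) * #|T|%:R ^+ N)); last first.
  by rewrite sumr_const card_ord -!mulrA mulr_natl.
apply: ler_sum => -[m /=]; rewrite ltnS => mM _.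
rewrite -(natr_card_set (fun V : N.-tuple T => size (greedy fresh V) == m)).
apply: le_trans (card_greedy_size q_ge0 card_stale N mM) _.
have -> : 'C(N, m)%:R * #|T|%:R ^+ m * (theta * #|T|%:R) ^+ (N - m)
    = 'C(N, m)%:R * theta ^+ (N - m) * #|T|%:R ^+ N.
  rewrite exprMn -(subnKC (leq_trans mM MN)) addKn exprD !mulrA.
  by rewrite [_ * _ * theta ^+ _]mulrAC.
apply: ler_wpM2r; first exact: exprn_ge0.
apply: ler_pM; rewrite ?exprn_ge0 ?ler0n //.
  rewrite -natrX ler_nat; apply: leq_trans (bin_le_expn _ _) _.
  have [N0|N_gt0] := posnP N; last by rewrite leq_pexp2l.
  by move: MN mM; rewrite N0 leqn0 => /eqP ->; rewrite leqn0 => /eqP ->.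
by apply: ler_wiXn2l => //; apply: leq_sub2l.
Qed.

Definition sep_fresh (T : eqType) (P : pred T) (r : rel T) (v : T) (g : seq T) :=
  P v && all (r v) g.

Section SeparatedGreedy.
Variables (T : finType) (P : pred T) (r : rel T).
Hypothesis r_sym : symmetric r.
Hypothesis r_irr : irreflexive r.

Notation greedy_sep := (greedy (sep_fresh P r)).

Lemma greedy_sepP l u : u \in greedy_sep l -> P u.
Proof.
elim: l => [|v l IH] //=; case: ifP => [/andP [Pv _]|_ /IH //].
by rewrite inE => /orP [/eqP ->|/IH].
Qed.

Lemma greedy_sep_rel l u1 u2 :
  u1 \in greedy_sep l -> u2 \in greedy_sep l -> u1 != u2 -> r u1 u2.
Proof.
elim: l => [|v l IH] //=; case: ifP => [/andP [_ /allP rv]|_]; last exact: IH.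
rewrite !inE => /orP [/eqP ->|h1] /orP [/eqP ->|h2]; rewrite ?eqxx // => u12.
- exact: rv h2.
- by rewrite r_sym rv.
- exact: IH.
Qed.

Lemma greedy_sep_uniq l : uniq (greedy_sep l).
Proof.
elim: l => [|v l IH] //=; case: ifP => [/andP [_ /allP rv]|_] //=.
by rewrite IH andbT; apply/negP => /rv; rewrite r_irr.
Qed.

End SeparatedGreedy.

Lemma expR_cosh_le (a : R) : expR a + expR (- a) <= 2 * expR (2 * a ^+ 2).
Proof.
have ea_gt0 := expR_gt0 a; have eNa_gt0 := expR_gt0 (- a).
have eaNa : expR a * expR (- a) = 1 by rewrite expRxMexpNx_1.
have ea_ge := expR_ge1Dx a; have eNa_ge := expR_ge1Dx (- a).
have [a_big|a_small] := lerP (1/2) `|a|.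
  have a_le : `|a| <= 2 * a ^+ 2.
    rewrite -(real_normK (num_real a)) expr2; have := normr_ge0 a; nra.
  have ea : expR a <= expR (2 * a ^+ 2).
    by rewrite ler_expR; apply: le_trans a_le; apply: ler_norm.
  have eNa : expR (- a) <= expR (2 * a ^+ 2).
    by rewrite ler_expR; apply: le_trans a_le; rewrite -normrN; apply: ler_norm.
  lra.
have e_ge := expR_ge1Dx (2 * a ^+ 2).
suff : expR a + expR (- a) <= 2 + 4 * a ^+ 2 by lra.
have /andP [a_gt a_lt] : - (1/2) < a < 1/2 by rewrite -ltr_norml.
(* [exp(+-a) (1 -+ a) <= exp(+-a) exp(-+a) = 1] bounds both exponentials *)
have k1 : expR a * (1 - a) <= 1.
  by rewrite -eaNa; apply: ler_wpM2l; [apply: ltW | lra].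
have k2 : expR (- a) * (1 + a) <= 1.
  by rewrite -eaNa mulrC; apply: ler_wpM2r; [apply: ltW | lra].
rewrite expr2; nra.
Qed.

Definition sign_dot (d : nat) (v : 'rV[bool]_d) (y : 'rV[R]_d) : R :=
  \sum_i sgnR (v 0 i) * y 0 i.

Lemma sum_prod_row (S : comPzSemiRingType) (d : nat) (F : 'I_d -> bool -> S) :
  \sum_(v : 'rV[bool]_d) \prod_i F i (v 0 i) = \prod_i (F i true + F i false).
Proof.
under [RHS]eq_bigr do rewrite -big_bool.
rewrite bigA_distr_bigA /=.
rewrite (reindex (fun g : {ffun 'I_d -> bool} => \row_i g i)) /=; last first.
  exists (fun v : 'rV[bool]_d => [ffun i => v 0 i]) => [g _|v _].
    by apply/ffunP => i; rewrite ffunE mxE.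
  by apply/rowP => i; rewrite !mxE ffunE.
by apply: eq_bigr => g _; apply: eq_bigr => i _; rewrite mxE.
Qed.

Lemma sum_expR_sign_dot (d : nat) (y : 'rV[R]_d) (lam : R) :
  \sum_(v : 'rV[bool]_d) expR (lam * sign_dot v y)
    <= 2 ^+ d * expR (2 * lam ^+ 2 * \sum_i y 0 i ^+ 2).
Proof.
under eq_bigr do rewrite /sign_dot mulr_sumr expR_sum.
rewrite (sum_prod_row (fun i b => expR (lam * (sgnR b * y 0 i)))) /=.
have -> : (2 : R) ^+ d = \prod_(i < d) 2 by rewrite prodr_const card_ord.
rewrite mulr_sumr expR_sum -big_split /=.
apply: ler_prod => i _; rewrite addr_ge0 ?expR_ge0 //=.
by rewrite /sgnR mul1r mulN1r mulrN -mulrA -exprMn expR_cosh_le.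
Qed.

Lemma card_sign_dot_ge (d : nat) (y : 'rV[R]_d) (u : R) :
  \sum_i y 0 i ^+ 2 = 1 -> 0 <= u ->
  (#|[set v : 'rV[bool]_d | u <= sign_dot v y]|%:R : R)
    <= 2 ^+ d * expR (- (u ^+ 2 / 8)).
Proof.
move=> y_unit u_ge0; pose lam := u / 4.
have markov : #|[set v : 'rV[bool]_d | u <= sign_dot v y]|%:R * expR (lam * u)
    <= 2 ^+ d * expR (2 * lam ^+ 2).
  have := sum_expR_sign_dot y lam; rewrite y_unit mulr1; apply: le_trans.
  rewrite natr_card_set mulr_suml; apply: ler_sum => v _.
  case: (boolP (u <= _)) => [le_u|_]; last by rewrite mul0r expR_ge0.
  by rewrite mul1r ler_expR ler_wpM2l ?divr_ge0.
have -> : expR (- (u ^+ 2 / 8)) = expR (2 * lam ^+ 2) / expR (lam * u).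
  by rewrite -expRN -expRD /lam; congr expR; field.
by rewrite mulrA ler_pdivlMr ?expR_gt0.
Qed.

Lemma card_abs_sign_dot_ge (d : nat) (y : 'rV[R]_d) (u : R) :
  \sum_i y 0 i ^+ 2 = 1 -> 0 <= u ->
  (#|[set v : 'rV[bool]_d | u <= `|sign_dot v y|]|%:R : R)
    <= 2 * 2 ^+ d * expR (- (u ^+ 2 / 8)).
Proof.
move=> y_unit u_ge0.
have Ny_unit : \sum_i (- y) 0 i ^+ 2 = 1.
  by rewrite -y_unit; apply: eq_bigr => i _; rewrite mxE sqrrN.
have sign_dotN v : sign_dot v (- y) = - sign_dot v y.
  by rewrite /sign_dot -sumrN; apply: eq_bigr => i _; rewrite mxE mulrN.
apply: (le_trans (y := #|[set v : 'rV[bool]_d | u <= sign_dot v y]|%:R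
   + #|[set v : 'rV[bool]_d | u <= sign_dot v (- y)]|%:R)).
  rewrite -natrD ler_nat; apply: leq_trans (leq_card_setU _ _).
  by apply: subset_leq_card; apply/subsetP => v; rewrite !inE sign_dotN ler_normr.
have := card_sign_dot_ge y_unit u_ge0; have := card_sign_dot_ge Ny_unit u_ge0.
lra.
Qed.

Lemma distR_sym (d : nat) (y z : 'rV[R]_d) : distR y z = distR z y.
Proof. by rewrite /distR; congr Num.sqrt; apply: eq_bigr => i _; rewrite -sqrrN opprB. Qed.

Lemma distR_xx (d : nat) (y : 'rV[R]_d) : distR y y = 0.
Proof. by rewrite /distR big1 ?sqrtr0 // => i _; rewrite subrr expr0n. Qed.

Lemma coord_le_distR (d : nat) (y z : 'rV[R]_d) i : `|y 0 i - z 0 i| <= distR y z.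
Proof.
rewrite /distR -sqrtr_sqr ler_sqrt ?sumr_ge0 // => [|j _]; last exact: sqr_ge0.
by rewrite (bigD1 i) //= lerDl sumr_ge0 // => j _; apply: sqr_ge0.
Qed.

Lemma sum_sqr_unit (d : nat) (y : 'rV[R]_d) : distR y 0 = 1 -> \sum_i y 0 i ^+ 2 = 1.
Proof.
rewrite /distR => /(congr1 (fun t => t ^+ 2)); rewrite sqr_sqrtr ?expr1n.
  by move <-; apply: eq_bigr => i _; rewrite mxE subr0.
by rewrite sumr_ge0 // => i _; apply: sqr_ge0.
Qed.

Lemma normr_sgnR b : `|sgnR b| = 1.
Proof. by case: b; rewrite /sgnR ?normrN normr1. Qed.

Lemma sign_dot_lipschitz (d : nat) (v : 'rV[bool]_d) (y z : 'rV[R]_d) :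
  `|sign_dot v y - sign_dot v z| <= d%:R * distR y z.
Proof.
rewrite /sign_dot -sumrB; apply: le_trans (ler_norm_sum _ _ _) _.
apply: (le_trans (y := \sum_(i < d) distR y z)); last first.
  by rewrite sumr_const card_ord mulr_natl.
apply: ler_sum => i _.
by rewrite -mulrBr normrM normr_sgnR mul1r coord_le_distR.
Qed.

Lemma dotR_vreal (d : nat) (v : 'rV[bool]_d) (y : 'rV[R]_d) :
  dotR (vreal v) y = (Num.sqrt d%:R)^-1 * sign_dot v y.
Proof.
rewrite /dotR /sign_dot mulr_sumr; apply: eq_bigr => i _.
by rewrite /vreal /sgnmx !mxE mulrA.
Qed.

Lemma card_rV_bool (d : nat) : (#|{: 'rV[bool]_d}|%:R : R) = 2 ^+ d.
Proof. by rewrite card_mx card_bool mul1n natrX. Qed.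

Lemma sqrt_le_sign_dot (d : nat) (s : R) (v : 'rV[bool]_d) (y : 'rV[R]_d) :
  (0 < d)%N -> 0 <= s ->
  Num.sqrt (s / d%:R) <= `|dotR (vreal v) y| -> Num.sqrt s <= `|sign_dot v y|.
Proof.
move=> d_gt0 s_ge0; rewrite dotR_vreal normrM ger0_norm ?invr_ge0 ?sqrtr_ge0 //.
have sqrt_d_gt0 : 0 < Num.sqrt (d%:R : R) by rewrite sqrtr_gt0 ltr0n.
rewrite ler_pdivlMl // => le_s; apply: le_trans le_s; rewrite -sqrtrM ?ler0n //.
by rewrite mulrC mulfVK // pnatr_eq0 -lt0n.
Qed.

Section FixedMatrix.
Variables (d k n : nat) (Mmsg : 'M[bool]_(d./2, d) -> (k * d).-tuple bool)
  (Rmsg : 'M[bool]_(d./2, d) -> 'rV[bool]_d -> n.-tuple (option 'rV[bool]_d))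
  (x : bob_fun d k n) (s : R) (A : 'M[bool]_(d./2, d)).
Hypothesis Rmsg_rows : forall A v, sub_rows A (Rmsg A v).
Hypothesis x_unit : forall M v Rm, distR (x M v Rm) 0 = 1.
Hypothesis d_gt0 : (0 < d)%N.
Hypothesis s_ge1 : 1 <= s.

Let out v := x (Mmsg A) v (Rmsg A v).
Let good v := success Mmsg Rmsg x s A v.
Let alpha : R := d%:R ^- 8.
Let far : rel 'rV[bool]_d := fun u1 u2 => alpha <= distR (out u1) (out u2).
Let fresh := sep_fresh good far.

Lemma alpha_gt0 : 0 < alpha.
Proof. by rewrite invr_gt0 exprn_gt0 // ltr0n. Qed.

Lemma far_irr : irreflexive far.
Proof. by move=> u; rewrite /far distR_xx lt_geF ?alpha_gt0. Qed.

Lemma far_sym : symmetric far.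
Proof. by move=> u1 u2; rewrite /far distR_sym. Qed.

Lemma greedy_le_packing_card (N : nat) (V : N.-tuple 'rV[bool]_d) :
  (size (greedy fresh V)
     <= packing_card (orth_entries x (xi'_par d) (Mmsg A) A [set v in V]) alpha)%N.
Proof.
have out_inj : {in greedy fresh V &, injective out}.
  move=> u1 u2 h1 h2 e; apply/eqP/negPn/negP => /(greedy_sep_rel far_sym h1 h2).
  by rewrite /far e distR_xx lt_geF ?alpha_gt0.
set Y := [fset y in map out (greedy fresh V)]%fset.
have -> : size (greedy fresh V) = #|` Y|.
  rewrite card_fseq undup_id ?size_map // map_inj_in_uniq //.
  exact: (greedy_sep_uniq _ far_irr).
rewrite /packing_card.
apply: (@leq_bigmax_seq _ _ _ (fun Z : {fset 'rV[R]_d} => #|` Z|) Y).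
  rewrite fpowersetE; apply/fsubsetP => _ /imfsetP [_ /mapP [u u_greedy ->] ->].
  have /andP [orth _] := greedy_sepP u_greedy.
  rewrite /orth_entries inE /=; apply/andP; split; last exact: orth.
  apply: (in_imfset2 _ (fun v Rm => x (Mmsg A) v Rm)); last exact: Rmsg_rows.
  by rewrite inE (greedy_sub u_greedy).
apply/forallP => -[y1 Yy1]; apply/forallP => -[y2 Yy2]; apply/implyP.
rewrite -(inj_eq val_inj) /=.
move: Yy1 Yy2 => /imfsetP [_ /mapP [u1 u1_greedy ->] ->].
move=> /imfsetP [_ /mapP [u2 u2_greedy ->] ->] out12.
apply: (greedy_sep_rel far_sym u1_greedy u2_greedy).
by apply: contra_neq out12 => ->.
Qed.

Let near_bound : R := 2 * 2 ^+ d * expR (- ((Num.sqrt s - 1) ^+ 2 / 8)).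

Lemma near_good_sign_dot v u : good v -> distR (out v) (out u) < alpha ->
  Num.sqrt s - 1 <= `|sign_dot v (out u)|.
Proof.
move=> /andP [_ /sqrt_le_sign_dot] /(_ d_gt0 (le_trans ler01 s_ge1)) good_v close.
have d_alpha : d%:R * alpha <= 1.
  rewrite ler_pdivrMr ?exprn_gt0 ?ltr0n // mul1r -natrX ler_nat.
  by rewrite -{1}(expn1 d) leq_pexp2l.
have := sign_dot_lipschitz v (out v) (out u).
have : d%:R * distR (out v) (out u) <= 1.
  by apply: le_trans d_alpha; rewrite ler_wpM2l ?ler0n ?ltW.
have := lerB_dist (sign_dot v (out v)) (sign_dot v (out u)).
lra.
Qed.

Lemma card_good_near u :
  (#|[set v | good v && (distR (out v) (out u) < alpha)]|%:R : R) <= near_bound.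
Proof.
have sqrt_s_ge1 : 1 <= Num.sqrt s.
  by rewrite -sqrtr1 ler_sqrt ?(le_trans ler01 s_ge1).
apply: le_trans (card_abs_sign_dot_ge (sum_sqr_unit (x_unit _ _ _)) _); last first.
  by rewrite subr_ge0.
rewrite ler_nat; apply: subset_leq_card; apply/subsetP => v; rewrite !inE.
by case/andP; apply: near_good_sign_dot.
Qed.

Lemma card_not_fresh g : (#|[set v | ~~ fresh v g]|%:R : R)
  <= #|[set v | ~~ good v]|%:R + (size g)%:R * near_bound.
Proof.
elim: g => [|u g IH].
  rewrite mul0r addr0 ler_nat; apply: subset_leq_card; apply/subsetP => v.
  by rewrite !inE /fresh /sep_fresh andbT.
apply: (le_trans (y := #|[set v | ~~ fresh v g]|%:R
   + #|[set v | good v && (distR (out v) (out u) < alpha)]|%:R)).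
  rewrite -natrD ler_nat; apply: leq_trans (leq_card_setU _ _).
  apply: subset_leq_card; apply/subsetP => v; rewrite !inE /fresh /sep_fresh /= /far.
  rewrite ltNge.
  by case: (good v) (alpha <= distR (out v) (out u)) => [] [] /=; rewrite ?orbF ?orbT.
rewrite /= mulrSr mulrDl mul1r addrA lerD ?card_good_near //.
Qed.

Variable K : R.
Hypothesis K_ge0 : 0 <= K.
Hypothesis K_small : 16 * K * expR (- ((Num.sqrt s - 1) ^+ 2 / 8)) <= 1.
Hypothesis good_quarter :
  #|{: 'rV[bool]_d}|%:R / 4 <= (#|[set v | success Mmsg Rmsg x s A v]|%:R : R).

Lemma card_not_fresh_le g : (size g <= Num.truncn K)%N ->
  (#|[set v | ~~ fresh v g]|%:R : R) <= 7 / 8 * #|{: 'rV[bool]_d}|%:R.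
Proof.
move=> g_small; apply: le_trans (card_not_fresh g) _.
have size_le_K : (size g)%:R <= K.
  by apply: le_trans (_ : (Num.truncn K)%:R <= K); rewrite ?ler_nat ?truncn_le.
have near_le : (size g)%:R * near_bound <= 2 ^+ d / 8.
  apply: le_trans (ler_wpM2r _ size_le_K) _.
    by rewrite !mulr_ge0 ?exprn_ge0 ?expR_ge0.
  have -> : K * near_bound
      = 16 * K * expR (- ((Num.sqrt s - 1) ^+ 2 / 8)) * (2 ^+ d / 8).
    by rewrite /near_bound; field.
  by apply: ler_piMl; rewrite ?divr_ge0 ?exprn_ge0.
move: good_quarter; rewrite natr_card_setC card_rV_bool; lra.
Qed.

Lemma card_packing_lt (N : nat) : (Num.truncn K <= N)%N ->
  (#|[set V : N.-tuple 'rV[bool]_d | ~~ (K <= (packing_card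
       (orth_entries x (xi'_par d) (Mmsg A) A [set v in V]) alpha)%:R)]|%:R : R)
    <= (Num.truncn K).+1%:R * N%:R ^+ Num.truncn K * (7 / 8) ^+ (N - Num.truncn K)
       * #|{: N.-tuple 'rV[bool]_d}|%:R.
Proof.
move=> KN; rewrite card_tuple natrX.
have seven_eighths : 0 <= (7 / 8 : R) <= 1.
  by apply/andP; split; lra.
apply: le_trans (card_greedy_size_le seven_eighths KN card_not_fresh_le).
rewrite ler_nat; apply: subset_leq_card; apply/subsetP => V; rewrite !inE -ltNge.
move=> /ltW packing_le_K; apply: leq_trans (greedy_le_packing_card V) _.
by rewrite truncn_ge_nat.
Qed.

End FixedMatrix.

(* Lower bound on s from which the numerical estimates below hold; the
   threshold d0 of the theorem is chosen so that s_par delta d >= s_min. *)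
Definition s_min : R := 128 * 128.

Lemma two_le_expR1 : (2 : R) <= expR 1.
Proof. by have := expR_ge1Dx (1 : R); lra. Qed.

Lemma seven_eighths_le_expR : (7 / 8 : R) <= expR (- (1 / 8)).
Proof. by apply: le_trans (expR_ge1Dx _); lra. Qed.

Lemma sample_size_exponent (c1 s K : R) (M N : nat) : s_min <= s ->
  c1 * s <= s / 32 -> 1 <= K -> M%:R <= K -> 16 * s * K < N.+1%:R -> (M <= N)%N ->
  1 + c1 * s + M%:R * (s / 8) + (N - M)%N%:R * (- (1 / 8)) <= - (s / 2).
Proof.
rewrite /s_min => s_large c1s_le K_ge1 M_le N_gt MN.
have sM_le : s * M%:R <= s * K by rewrite ler_wpM2l //; lra.
have sK_ge : s <= s * K by rewrite ler_peMr //; lra.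
have K_le : K <= s * K by rewrite ler_peMl //; lra.
by rewrite natrB // -natr1 in N_gt *; lra.
Qed.

Section SampleSize.
Variables (c1 s : R).
Hypothesis s_large : s_min <= s.
Hypothesis c1_gt0 : 0 < c1.
Hypothesis c1_small : c1 <= 1 / 32.

Let K := expR (c1 * s).
Let N := Num.truncn (16 * s * K).
Let M := Num.truncn K.

Let s_ge0 : 0 <= s. Proof. by move: s_large; rewrite /s_min; lra. Qed.

Let c1s_le : c1 * s <= s / 32.
Proof. by have := ler_wpM2r s_ge0 c1_small; lra. Qed.

Let K_ge1 : 1 <= K.
Proof.
rewrite /K; have := expR_ge1Dx (c1 * s); have := mulr_ge0 (ltW c1_gt0) s_ge0.
lra.
Qed.

Lemma near_mass_small : 16 * K * expR (- ((Num.sqrt s - 1) ^+ 2 / 8)) <= 1.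
Proof.
set w : R := Num.sqrt s.
have w2 : w ^+ 2 = s by rewrite sqr_sqrtr.
have w_ge : 128 <= w.
  by rewrite -(@ler_pXn2r _ 2) // ?nnegrE ?sqrtr_ge0 // w2 expr2.
have s_le : s / 16 <= (w - 1) ^+ 2 / 8.
  have := ler_wpM2r (le_trans (ler0n _ 128) w_ge) w_ge.
  by rewrite -w2 sqrrB !expr2; lra.
have e_ge : 16 <= expR (s / 32).
  by have := expR_ge1Dx (s / 32); move: s_large; rewrite /s_min; lra.
rewrite /K -mulrA -expRD.
have e_le : expR (c1 * s - (w - 1) ^+ 2 / 8) * expR (s / 32) <= 1.
  by rewrite -expRD -[X in _ <= X]expR0 ler_expR; move: s_le c1s_le; lra.
have := expR_ge0 (c1 * s - (w - 1) ^+ 2 / 8); nra.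
Qed.

Lemma truncn_le_sample_size : (M <= N)%N.
Proof.
apply: le_truncn; rewrite -[X in X <= _]mul1r ler_wpM2r ?(le_trans ler01 K_ge1) //.
by move: s_large; rewrite /s_min; lra.
Qed.

Let sample_size_le_expR : (N%:R : R) <= expR (s / 8).
Proof.
have e_ge := expR_ge1Dx (s / 32).
have e16 : expR (s / 16) = expR (s / 32) * expR (s / 32).
  by rewrite -expRD; congr expR; field.
have K_le : K <= expR (s / 16).
  by rewrite ler_expR; move: c1s_le s_ge0; lra.
have s16_le : 16 * s <= expR (s / 16).
  by rewrite e16; move: s_large e_ge; rewrite /s_min; nra.
apply: (le_trans (y := 16 * s * K)).
  by rewrite truncn_le !mulr_ge0 ?(le_trans ler01 K_ge1).
have -> : s / 8 = s / 16 + s / 16 by field.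
by rewrite expRD ler_pM ?mulr_ge0 ?(le_trans ler01 K_ge1).
Qed.

Lemma sample_size_bound :
  M.+1%:R * N%:R ^+ M * (7 / 8) ^+ (N - M) <= expR (- (s / 2)).
Proof.
have /andP [M_le _] := truncn_itv (le_trans ler01 K_ge1).
have /andP [_ N_gt] := truncn_itv (mulr_ge0 (mulr_ge0 (ler0n _ 16) s_ge0)
  (le_trans ler01 K_ge1)).
have Mp1_le : (M.+1%:R : R) <= expR (1 + c1 * s).
  rewrite -natr1 expRD; apply: (le_trans (y := K + K)); first exact: lerD.
  by rewrite -mulr2n -mulr_natl ler_wpM2r ?expR_ge0 ?two_le_expR1.
have NM_le : (N%:R : R) ^+ M <= expR (M%:R * (s / 8)).
  by rewrite expRM_natl lerXn2r ?nnegrE ?ler0n ?expR_ge0 ?sample_size_le_expR.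
have seven_le : (7 / 8 : R) ^+ (N - M) <= expR ((N - M)%N%:R * (- (1 / 8))).
  by rewrite expRM_natl lerXn2r ?nnegrE ?expR_ge0 ?divr_ge0 ?seven_eighths_le_expR.
apply: le_trans (ler_pM _ _ (ler_pM _ _ Mp1_le NM_le) seven_le) _;
  rewrite ?mulr_ge0 ?exprn_ge0 ?ler0n ?divr_ge0 //.
rewrite -!expRD ler_expR.
exact: (sample_size_exponent s_large c1s_le K_ge1 M_le N_gt truncn_le_sample_size).
Qed.

End SampleSize.

Lemma s_par_ge_s_min (delta : R) (d : nat) : 0 < delta -> delta < 1 ->
  ((Num.truncn (expR s_min)).+1 <= d)%N -> s_min <= s_par delta d.
Proof.
move=> delta_gt0 delta_lt1 d_large.
have s_min_ge1 : 1 <= s_min by rewrite /s_min; lra.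
have expR_le_d : expR s_min <= d%:R.
  have /andP [_ lt_d] := truncn_itv (expR_ge0 s_min).
  by apply/ltW/(lt_le_trans lt_d); rewrite ler_nat.
have ln_ge : s_min <= ln (d%:R : R).
  by rewrite -ler_expR lnK // posrE (lt_le_trans (expR_gt0 _) expR_le_d).
have pow_ge1 : 1 <= powR (d%:R : R) (1 - delta / 2).
  have d_ge1 : (1 : R) <= d%:R by rewrite ler1n (leq_trans _ d_large).
  by rewrite -[X in X <= _](powRr0 (d%:R : R)) ler_powR //; lra.
have ln_le_sqr : ln (d%:R : R) <= ln (d%:R : R) ^+ 2.
  by rewrite expr2 ler_peMl // (le_trans _ ln_ge) // (le_trans ler01).
rewrite /s_par; apply: (le_trans ln_ge); apply: (le_trans ln_le_sqr).
by rewrite ler_peMl ?sqr_ge0.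
Qed.

Lemma card_set_ratio_ge (F : realFieldType) (U : finType) (P : pred U) (e : F) :
  (0 < #|U|)%N -> (#|[set u | ~~ P u]|%:R : F) <= e * #|U|%:R ->
  1 - e <= #|[set u | P u]|%:R / #|U|%:R.
Proof.
move=> U_gt0; rewrite natr_card_setC ler_pdivlMr ?ltr0n // mulrBl mul1r.
lra.
Qed.

Local Open Scope fset_scope.

Theorem lemma5p4 :
  exists c0 : R, 0 < c0 /\
  forall c1 : R, 0 < c1 -> c1 <= c0 ->
  forall delta : R, 0 < delta -> delta < 1 ->
  exists d0 : nat, forall d : nat, (d0 <= d)%N -> ~~ odd d ->
  forall (k n : nat)
    (Mmsg : 'M[bool]_(d./2, d) -> (k * d).-tuple bool)
    (Rmsg : 'M[bool]_(d./2, d) -> 'rV[bool]_d -> n.-tuple (option 'rV[bool]_d))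
    (x : bob_fun d k n),
    (* Alice's second message consists of rows of A or nil *)
    (forall A v, sub_rows A (Rmsg A v)) ->
    (* Bob always outputs a unit vector *)
    (forall M v Rm, distR (x M v Rm) 0 = 1) ->
    let s := s_par delta d in
    (* the protocol succeeds w.p. >= 1/2 over uniform (A, v) *)
    (#|[set Av : 'M[bool]_(d./2, d) * 'rV[bool]_d
         | success Mmsg Rmsg x s Av.1 Av.2]|%:R : R)
      >= #|{: 'M[bool]_(d./2, d) * 'rV[bool]_d}|%:R / 2 ->
    let K := expR (c1 * s) in
    let Nsamp := Num.truncn (16 * s * K) in
    forall A : 'M[bool]_(d./2, d),
      (* A in A_suc *)
      (#|[set v : 'rV[bool]_d | success Mmsg Rmsg x s A v]|%:R : R)
        >= #|{: 'rV[bool]_d}|%:R / 4 ->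
      (#|[set V : Nsamp.-tuple 'rV[bool]_d
          | K <= (packing_card
                    (orth_entries x (xi'_par d) (Mmsg A) A [set v in V])
                    (d%:R ^- 8))%:R]|%:R : R)
        / #|{: Nsamp.-tuple 'rV[bool]_d}|%:R
      >= 1 - expR (- (s / 2)).
Proof.
exists (1 / 32); split => [|c1 c1_gt0 c1_small delta delta_gt0 delta_lt1]; first by lra.
exists (Num.truncn (expR s_min)).+1.
move=> d d_large _ k n Mmsg Rmsg x Rmsg_rows x_unit s _ K N A A_suc.
have s_large : s_min <= s := s_par_ge_s_min delta_gt0 delta_lt1 d_large.
have s_ge1 : 1 <= s by move: s_large; rewrite /s_min; lra.
have d_gt0 : (0 < d)%N := leq_trans (ltn0Sn _) d_large.
apply: card_set_ratio_ge; first by rewrite card_tuple card_mx card_bool !expn_gt0.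
have K_small := near_mass_small s_large c1_small.
have KN := truncn_le_sample_size s_large c1_gt0.
apply: le_trans (card_packing_lt Rmsg_rows x_unit d_gt0 s_ge1 (expR_ge0 _)
  K_small A_suc KN) _.
by rewrite ler_wpM2r ?ler0n ?sample_size_bound.
Qed.
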